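(* Let $P\subseteq S_n$ be a permutation array with Hamming distance $d$, and let $m\in\{1,\ldots,n-1\}$. Suppose that for any $\sigma,\tau\in P$ the disjoint cycle decomposition of $\sigma^{-1}\tau$ has no cycle of odd length $\ell\in\{3,\ldots,2m+1\}$. Then (1) ${\rm hd}(P^{{\sf CT}^m})\ge d-2m$, and (2) if $d>2m$ then $|P^{{\sf CT}^m}|=|P|$.
   Context: $S_n$ is the symmetric group on $\{0,1,\ldots,n-1\}$, with composition from left to right: $\tau\sigma(x):=\sigma(\tau(x))$. A permutation array is a non-empty subset $P\subseteq S_n$; ${\rm hd}(\sigma,\tau)=|\{x:\sigma(x)\neq\tau(x)\}|$ and the Hamming distance of $P$ is ${\rm hd}(P)=\min\{{\rm hd}(\sigma,\tau):\sigma,\tau\in P,\ \sigma\neq\tau\}$. The contraction of $\sigma\in S_n$ is $\sigma^{\sf CT}\in S_{n-1}$ (on $\{0,\ldots,n-2\}$) defined by $\sigma^{\sf CT}(x)=\sigma(n-1)$ if $x=\sigma^{-1}(n-1)$ and $\sigma^{\sf CT}(x)=\sigma(x)$ otherwise (i.e. delete $n-1$ from the cycle notation). For $1\le m\le n-1$, $\sigma^{{\sf CT}^m}=(\sigma^{{\sf CT}^{m-1}})^{\sf CT}\in S_{n-m}$ with $\sigma^{{\sf CT}^1}=\sigma^{\sf CT}$, and $P^{{\sf CT}^m}=\{\sigma^{{\sf CT}^m}:\sigma\in P\}$. *)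

From mathcomp Require Import all_boot all_order all_fingroup.
Set Implicit Arguments.
Unset Strict Implicit.
Unset Printing Implicit Defensive.
Local Open Scope group_scope.

(* Permutations of {0,...,n-1} are {perm 'I_n}; mathcomp's product
   (s * t) x = t (s x) is exactly the paper's left-to-right composition. *)

Definition hd (n : nat) (s t : {perm 'I_n}) : nat := #|[set x | s x != t x]|.

(* Hamming distance of a permutation array: minimum over distinct pairs.
   Convention: if P has fewer than two elements the value is n. *)
Definition hdP (n : nat) (P : {set {perm 'I_n}}) : nat :=
  \big[minn/n]_(s in P) \big[minn/n]_(t in P | t != s) hd s t.

(* Contraction S_{j+1} -> S_j.  sigma^CT(x) = sigma(j) if sigma(x) = j,
   sigma(x) otherwise.  We compute it as the restriction to {0..j-1} of
   sigma * (j sigma(j)), which fixes j. *)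
Definition ct_aux (j : nat) (s : {perm 'I_j.+1}) : {perm 'I_j.+1} :=
  s * tperm (s ord_max) ord_max.

Definition ct_fun (j : nat) (s : {perm 'I_j.+1}) (x : 'I_j) : 'I_j :=
  insubd x (val (ct_aux s (widen_ord (leqnSn j) x))).

Lemma ct_aux_max j (s : {perm 'I_j.+1}) : ct_aux s ord_max = ord_max.
Proof. by rewrite /ct_aux permM tpermL. Qed.

Lemma ct_fun_val j (s : {perm 'I_j.+1}) (x : 'I_j) :
  val (ct_fun s x) = val (ct_aux s (widen_ord (leqnSn j) x)).
Proof.
rewrite /ct_fun val_insubd.
set y := ct_aux s _.
have : y != ord_max.
  apply: contraNneq (_ : widen_ord (leqnSn j) x != ord_max) => [hy|].
    by apply/eqP; apply: (perm_inj (s := ct_aux s)); rewrite ct_aux_max.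
  by rewrite -val_eqE /= neq_ltn ltn_ord.
have := ltn_ord y; rewrite ltnS leq_eqVlt -val_eqE /= => /orP[->//|-> _ //].
Qed.

Lemma ct_fun_inj j (s : {perm 'I_j.+1}) : injective (ct_fun s).
Proof.
move=> a b /(congr1 val); rewrite !ct_fun_val => /val_inj/perm_inj.
by move/(congr1 val) => /= /val_inj.
Qed.

Definition ct_succ (j : nat) (s : {perm 'I_j.+1}) : {perm 'I_j} :=
  perm (@ct_fun_inj j s).

(* Contraction S_j -> S_{j-1} (trivial for j = 0, never used there). *)
Definition ct (j : nat) : {perm 'I_j} -> {perm 'I_j.-1} :=
  match j return {perm 'I_j} -> {perm 'I_j.-1} with
  | 0 => fun _ => 1
  | j'.+1 => @ct_succ j'
  end.

Fixpoint ctm (n m : nat) : {perm 'I_n} -> {perm 'I_(n - m)} :=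
  match m return {perm 'I_n} -> {perm 'I_(n - m)} with
  | 0 => fun s => cast_perm (esym (subn0 n)) s
  | m'.+1 => fun s => cast_perm (esym (subnS n m')) (ct (ctm m' s))
  end.

Definition ctm_set (n m : nat) (P : {set {perm 'I_n}}) : {set {perm 'I_(n - m)}} :=
  [set ctm m s | s in P].

(* Write g = s^-1 * t, so that hd s t is n minus the number of fixed points of
   g.  Contracting the top point z turns s into [excise z s] and g into
   g * tperm (t z) (g z) * tperm (t z) z: only the cycles of g through z and
   t z change, and they are replaced by at most three cycles, one of them {z}.
   Such a step creates at most two fixed points, unless it breaks a long odd
   cycle completely into fixed points, and a cycle of length 2k+1 can only be
   exhausted after k steps have been spent on it.  Carrying a budget of such
   cycles through the m steps shows that m contractions create at most 2m fixed
   points plus one per odd cycle of g of length 3..2m+1; by hypothesis there is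
   none.  Part (2) follows since distinct elements of P stay at distance at
   least d - 2m > 0. *)

From mathcomp Require Import all_boot all_order all_fingroup.
From mathcomp Require Import zify.
Set Implicit Arguments.
Unset Strict Implicit.
Unset Printing Implicit Defensive.
Import Order.TTheory.

Section CyclesTimesTransposition.
Variable T : finType.
Implicit Types (h : {perm T}) (a b x y : T) (X : {set T}).
Local Open Scope group_scope.

Lemma porbit_stable h x y : y \in porbit h x -> h y \in porbit h x.
Proof. by move=> /porbitP[i ->]; rewrite -permM -expgSr mem_porbit. Qed.

Lemma porbit_eq h x y : y \in porbit h x -> porbit h y = porbit h x.
Proof. by move=> yx; apply/eqP; rewrite eq_porbit_mem. Qed.

Lemma porbit_app h x : porbit h (h x) = porbit h x.
Proof. exact: (porbit_perm h 1). Qed.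

Lemma porbit_fixed h x : h x = x -> porbit h x = [set x].
Proof.
move=> hx; apply/setP => y; rewrite inE; apply/porbitP/eqP => [[i ->]|->].
  by rewrite permX_fix.
by exists 0; rewrite expg0 perm1.
Qed.

Lemma porbit_sub h x X :
  x \in X -> {in X, forall y, h y \in X} -> porbit h x \subset X.
Proof.
move=> xX hX; apply/subsetP => _ /porbitP[i ->]; rewrite permX.
by elim: i => //= i IH; apply: hX.
Qed.

Lemma porbit_neq_disjoint h x y :
  porbit h x != porbit h y -> [disjoint porbit h x & porbit h y].
Proof.
move=> neq; apply/pred0P => w /=; apply/andP => -[/porbit_eq wx /porbit_eq wy].
by move: neq; rewrite -wx -wy eqxx.
Qed.

Lemma card_porbitU h x y : porbit h x != porbit h y ->
  #|porbit h x :|: porbit h y| = #|porbit h x| + #|porbit h y|.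
Proof.
by move/porbit_neq_disjoint/disjoint_setI0; rewrite cardsU => ->; rewrite cards0 subn0.
Qed.

Lemma porbit_mul_tperm_out h a b x : a \notin porbit h x -> b \notin porbit h x ->
  porbit (h * tperm a b) x = porbit h x.
Proof.
move=> ax bx; suff iterE i : ((h * tperm a b) ^+ i) x = (h ^+ i) x.
  by apply/setP => y; apply/porbitP/porbitP => -[i ->]; exists i; rewrite iterE.
elim: i => // i IH; rewrite !expgSr !permM IH.
have hix : h ((h ^+ i) x) \in porbit h x by rewrite -permM -expgSr mem_porbit.
by rewrite tpermD //; [apply: contraNneq ax => -> | apply: contraNneq bx => ->].
Qed.

Lemma porbit_mul_tpermU_sub h a b :
  porbit (h * tperm a b) a :|: porbit (h * tperm a b) b \subset porbit h a :|: porbit h b.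
Proof.
have stable : {in porbit h a :|: porbit h b, forall y,
    (h * tperm a b) y \in porbit h a :|: porbit h b}.
  move=> y; rewrite permM !inE => /orP[] /porbit_stable hy;
  by case: tpermP => [_|_|_ _]; rewrite ?porbit_id ?orbT ?hy ?orbT.
by rewrite subUset !porbit_sub // !inE porbit_id ?orbT.
Qed.

Lemma porbit_mul_tpermU h a b :
  porbit (h * tperm a b) a :|: porbit (h * tperm a b) b = porbit h a :|: porbit h b.
Proof.
apply/eqP; rewrite eqEsubset porbit_mul_tpermU_sub /=.
by rewrite -{1 2}[h](mulgK (tperm a b)) tpermV porbit_mul_tpermU_sub.
Qed.

Lemma notin_porbitsD h (Old : {set {set T}}) (C : {set T}) x :
  x \in C -> porbit h x \in Old -> C \notin porbits h :\: Old.
Proof.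
move=> xC xOld; apply/setDP => -[/imsetP[y _ Cy]]; apply/negP/negPn.
by rewrite Cy -(porbit_eq (x := y) (y := x)) -?Cy.
Qed.

Lemma porbits_mul_tpermE h a b :
  porbits (h * tperm a b) = (porbits h :\: [set porbit h a; porbit h b]) :|:
                            [set porbit (h * tperm a b) a; porbit (h * tperm a b) b].
Proof.
set h' := h * tperm a b; apply/setP => C; apply/idP/idP.
  case/imsetP => y _ ->; rewrite !inE.
  case: (boolP (a \in porbit h' y)) => [/porbit_eq ->|ay]; first by rewrite eqxx orbT.
  case: (boolP (b \in porbit h' y)) => [/porbit_eq ->|by_]; first by rewrite eqxx !orbT.
  have E : porbit h y = porbit h' y.
    by rewrite -[in LHS](mulgK (tperm a b) h) tpermV porbit_mul_tperm_out.
  rewrite -E imset_f // andbT !eq_porbit_mem ![y \in _]porbit_sym E.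
  by rewrite negb_or ay by_.
rewrite !inE => /orP[/andP[]|/orP[]/eqP->]; try exact: imset_f.
move=> + /imsetP[y _ Cy]; rewrite Cy => /norP[na nb].
rewrite !eq_porbit_mem ![y \in _]porbit_sym in na nb.
by rewrite -(porbit_mul_tperm_out na nb) imset_f.
Qed.

Lemma disjoint_porbitsD h (Old New : {set {set T}}) :
  {in New, forall C : {set T}, exists2 x, x \in C & porbit h x \in Old} ->
  [disjoint New & porbits h :\: Old].
Proof.
move=> hNew; apply/pred0P => C /=; case: (boolP (C \in New)) => //= /hNew[x xC xOld].
exact/negbTE/(notin_porbitsD xC).
Qed.

Lemma porbits_mul_tperm_disjoint h a b :
  [disjoint [set porbit (h * tperm a b) a; porbit (h * tperm a b) b] &
            porbits h :\: [set porbit h a; porbit h b]].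
Proof.
apply: disjoint_porbitsD => C /set2P[]->; [exists a | exists b];
  by rewrite ?porbit_id // !inE eqxx ?orbT.
Qed.

Lemma card_porbits_mul_tperm h a b :
  #|[set porbit (h * tperm a b) a; porbit (h * tperm a b) b]| + (a \notin porbit h b).*2 =
  #|[set porbit h a; porbit h b]| + (a != b).
Proof.
have := porbits_mul_tperm h^-1 a b; rewrite /= porbitV porbitsV.
have -> : tperm a b * h^-1 = (h * tperm a b)^-1 by rewrite invMg tpermV.
rewrite porbitsV porbits_mul_tpermE.
have sub : [set porbit h a; porbit h b] \subset porbits h.
  by rewrite subUset !sub1set !imset_f.
rewrite cardsU disjoint_setI0 1?disjoint_sym ?porbits_mul_tperm_disjoint //.
rewrite cards0 subn0 cardsDS //; have := subset_leq_card sub.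
by case: (a != b); case: (a \notin _) => /=; lia.
Qed.

Lemma porbit_mul_tperm_split h a b : a != b -> b \in porbit h a ->
  porbit (h * tperm a b) a != porbit (h * tperm a b) b.
Proof.
move=> ab ba; have := card_porbits_mul_tperm h a b.
by rewrite porbit_sym ba (porbit_eq ba) setUid cards1 ab cards2; case: eqP.
Qed.

Lemma porbit_mul_tperm_merge h a b : b \notin porbit h a ->
  porbit (h * tperm a b) a = porbit (h * tperm a b) b.
Proof.
move=> ba; have ab : a != b by apply: contraNneq ba => <-; apply: porbit_id.
have neq : porbit h a != porbit h b by rewrite eq_porbit_mem porbit_sym.
have := card_porbits_mul_tperm h a b.
by rewrite porbit_sym ba ab !cards2 neq; case: eqP.
Qed.

End CyclesTimesTransposition.

Section CycleBudget.
Variable T : finType.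
Implicit Types (C O : {set T}) (P N S Old New : {set {set T}}).

Definition nfixed P := \sum_(C in P) (#|C| == 1).

Definition long_odd C := odd #|C| && (2 < #|C|).

(* A cycle of length [2k+1] needs [k] contraction steps to be exhausted. *)
Definition cost S := \sum_(C in S) #|C|./2.

Definition affordable P r S := [&& S \subset P, [forall C in S, long_odd C] & cost S <= r].

(* Passing from the cycles [P] to [P'] creates at most two fixed points, once
   long odd cycles exhausted in [P'] are traded for cycles of [P] at the price
   of one more unit of budget. *)
Definition bounded_step P P' := forall r S', affordable P' r S' ->
  exists2 S, affordable P r.+1 S & nfixed P' + #|S'| <= nfixed P + 2 + #|S|.

Lemma sum_setU_disjoint (F : {set T} -> nat) P N : [disjoint P & N] ->
  \sum_(C in P :|: N) F C = \sum_(C in P) F C + \sum_(C in N) F C.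
Proof. by move=> PN; rewrite -bigU //; apply: eq_bigl => C; rewrite inE. Qed.

Lemma sum_subset_indicator (F : {set T} -> nat) N New : N \subset New ->
  \sum_(C in N) F C = \sum_(C in New) (C \in N) * F C.
Proof.
move=> sN; rewrite big_mkcond [in RHS]big_mkcond /=; apply: eq_bigr => C _.
case: (boolP (C \in N)) => CN; first by rewrite (subsetP sN C CN) mul1n.
by rewrite mul0n; case: ifP.
Qed.

Lemma sum_set3 (I : finType) (F : I -> nat) (i1 i2 i3 : I) :
  i1 != i2 -> i1 != i3 -> i2 != i3 ->
  \sum_(i in [set i1; i2; i3]) F i = F i1 + F i2 + F i3.
Proof.
move=> n12 n13 n23; rewrite -setUA big_setU1 ?inE ?negb_or ?n12 ?n13 //=.
by rewrite big_setU1 ?inE //= big_set1 addnA.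
Qed.

Lemma nfixed_add_card N New : N \subset New -> [forall C in N, long_odd C] ->
  nfixed New + #|N| = \sum_(C in New) ((#|C| == 1) || (C \in N)).
Proof.
move=> sN /forall_inP oddN.
rewrite -sum1_card (sum_subset_indicator _ sN) /nfixed -big_split.
apply: eq_bigr => C _; case: (boolP (C \in N)) => CN; last by rewrite orbF; case: (_ == _).
by have /andP[_ C3] := oddN C CN; rewrite orbT gtn_eqF // ltnW.
Qed.

Lemma affordable0 P r : affordable P r set0.
Proof.
rewrite /affordable sub0set /cost big_set0 leq0n andbT.
by apply/forall_inP => C; rewrite inE.
Qed.

Lemma bounded_step_small Old New : #|New| <= 2 -> bounded_step Old New.
Proof.
move=> New2 r N /and3P[sN oddN _]; exists set0; first exact: affordable0.
rewrite nfixed_add_card // cards0 addn0; apply: leq_trans (leq_addl _ _).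
by apply: leq_trans New2; rewrite -sum1_card; apply: leq_sum => C _; apply: leq_b1.
Qed.

Lemma odd_add_succ a b : odd a -> odd b ->
  [/\ odd (a + b).+1, 2 < (a + b).+1 & (a + b).+1./2 = (a./2 + b./2).+1].
Proof. by move=> oa ob; split; lia. Qed.

Lemma bounded_step_split3 O A B z :
  A != B -> A != [set z] -> B != [set z] -> #|O| = (#|A| + #|B|).+1 ->
  bounded_step [set O] [set A; B; [set z]].
Proof.
move=> nAB nAz nBz cardO r N /and3P[sN oddN cN].
have oddNP C : C \in N -> long_odd C by move/forall_inP: oddN; apply.
have zN : [set z] \notin N by apply: contraTN isT => /oddNP; rewrite /long_odd cards1.
rewrite nfixed_add_card // (sum_set3 (I := {set T})) // cards1 (negbTE zN) /=.
move: cN; rewrite /cost (sum_subset_indicator _ sN) (sum_set3 (I := {set T})) //.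
rewrite (negbTE zN) mul0n addn0.
case: (boolP (((#|A| == 1) || (A \in N)) && ((#|B| == 1) || (B \in N))))
  => [/andP[dA dB]|split2] cN.
  rewrite dA dB.
  (* [A] and [B] are fixed points or paid-for odd cycles, so [O] is a long odd
     cycle costing one more. *)
  have odd_half C : (#|C| == 1) || (C \in N) -> odd #|C| /\ (C \in N) * #|C|./2 = #|C|./2.
    case/orP => [/eqP C1 | CN]; first by rewrite C1 muln0.
    by have /andP[oC _] := oddNP C CN; rewrite CN mul1n.
  have [oA hA] := odd_half A dA; have [oB hB] := odd_half B dB.
  have [oO gtO hO] := odd_add_succ oA oB.
  exists [set O]; last by rewrite cards1 leq_add2r leq_addl.
  rewrite /affordable sub1set set11 /cost big_set1 cardO hO ltnS -hA -hB cN andbT.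
  by apply/forall_inP => _ /set1P ->; rewrite /long_odd cardO oO gtO.
exists set0; first exact: affordable0.
rewrite cards0 addn0; apply: leq_trans (leq_addl _ 2).
by move: split2; case: (_ || _); case: (_ || _).
Qed.

Lemma bounded_step_local P Old New :
  Old \subset P -> [disjoint New & P :\: Old] -> bounded_step Old New ->
  bounded_step P ((P :\: Old) :|: New).
Proof.
move=> sOld dNew stepON r S' /and3P[sS' oddS' cS'].
set N := S' :&: New; set S0 := S' :\: New.
have oddS'P C : C \in S' -> long_odd C by move/forall_inP: oddS'; apply.
have sS0 : S0 \subset P :\: Old.
  apply/subsetP => C; rewrite !inE => /andP[CnNew /(subsetP sS')].
  by rewrite !inE (negbTE CnNew) orbF.
have affN : affordable New (cost N) N.
  rewrite /affordable subsetIr leqnn andbT.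
  by apply/forall_inP => C /setIP[/oddS'P].
have [O /and3P[sO oddO cO] gainO] := stepON _ _ affN.
have dOld : [disjoint P :\: Old & Old] by rewrite disjoints_subset setDE subsetIr.
have dS0O : [disjoint S0 & O] := disjointW sS0 sO dOld.
have splitS' (F : {set T} -> nat) :
    \sum_(C in S') F C = \sum_(C in N) F C + \sum_(C in S0) F C.
  exact: big_setID.
have splitP (F : {set T} -> nat) :
    \sum_(C in P) F C = \sum_(C in Old) F C + \sum_(C in P :\: Old) F C.
  by rewrite (big_setID Old) (setIidPr sOld).
exists (S0 :|: O).
  rewrite /affordable subUset (subset_trans sS0 (subsetDl _ _)) (subset_trans sO sOld) /=.
  apply/andP; split.
    apply/forall_inP => C /setUP[/setDP[/oddS'P //]|].
    by move/forall_inP: oddO; apply.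
  rewrite /cost sum_setU_disjoint //; apply: leq_trans (leq_add (leqnn _) cO) _.
  by rewrite addnS ltnS addnC -splitS'.
have dPN : [disjoint P :\: Old & New] by rewrite disjoint_sym.
move: gainO; rewrite -!sum1_card /nfixed !(sum_setU_disjoint _ dPN, sum_setU_disjoint _ dS0O).
rewrite splitP (splitS' (fun=> 1)).
move: (\sum_(C in P :\: Old) _) (\sum_(C in New) _) (\sum_(C in Old) _) => fPO fNew fOld.
move: (\sum_(C in N) _) (\sum_(C in S0) _) (\sum_(C in O) _) => nN nS0 nO gain.
by rewrite (addnC fOld) -!addnA leq_add2l addnA (addnC nS0) !addnA leq_add2r.
Qed.

End CycleBudget.

Section ExcisionStep.
Variables (T : finType) (g : {perm T}) (u z : T).
Local Open Scope group_scope.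
Local Notation v := (g z).
Local Notation g1 := (g * tperm u v).
Local Notation g2 := (g1 * tperm u z).
Local Notation Old := [set porbit g u; porbit g v].
Local Notation New := (([set porbit g1 v] :\ porbit g1 u) :|: [set porbit g2 u; [set z]]).

Lemma porbit_step1_z : porbit g1 z = porbit g1 u.
Proof. by rewrite -porbit_app permM tpermR. Qed.

Lemma porbit_step2_z : porbit g2 z = [set z].
Proof. by apply: porbit_fixed; rewrite permM permM tpermR tpermL. Qed.

Lemma porbits_excision_step : porbits g2 = (porbits g :\: Old) :|: New.
Proof.
rewrite porbits_mul_tpermE porbit_step1_z setUid porbits_mul_tpermE setDUl -setUA.
rewrite [[set _; _] :\ _]setDUl setDv set0U porbit_step2_z; congr (_ :|: _).
apply/setDidPl; rewrite disjoint_sym disjoints1.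
by rewrite (notin_porbitsD (porbit_id _ _)) // !inE eqxx.
Qed.

Lemma excision_step_disjoint : [disjoint New & porbits g :\: Old].
Proof.
apply: disjoint_porbitsD => C /setUP[/setD1P[_ /set1P->]|/set2P[]->].
- by exists v; rewrite ?porbit_id // !inE eqxx orbT.
- by exists u; rewrite ?porbit_id // !inE eqxx.
- by exists z; rewrite ?inE // -porbit_app eqxx orbT.
Qed.

Lemma bounded_step_excision_cycles : bounded_step Old New.
Proof.
case: (eqVneq (porbit g1 v) (porbit g1 u)) => [O1vu | nO1vu].
  by apply: bounded_step_small; rewrite O1vu setDv set0U cards2 ltnS leq_b1.
case: (eqVneq u z) => [uz | nuz].
  have O2u : porbit g2 u = [set z] by rewrite -porbit_step2_z uz.
  apply: bounded_step_small; rewrite O2u setUid.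
  rewrite (leq_trans (leq_card_setU _ _)) // cards1 addn1 ltnS.
  by rewrite (leq_trans (subset_leq_card (subsetDl _ _))) ?cards1.
have vu : v \in porbit g u by apply: contraNT nO1vu => /porbit_mul_tperm_merge ->.
have zO1u : z \in porbit g1 u by rewrite -porbit_step1_z porbit_id.
have nO2uz := porbit_mul_tperm_split nuz zO1u.
have nO1uv : porbit g1 u != porbit g1 v by rewrite eq_sym; exact: nO1vu.
have cardOu : #|porbit g u| = #|porbit g1 u| + #|porbit g1 v|.
  by rewrite -(card_porbitU nO1uv) porbit_mul_tpermU (porbit_eq vu) setUid.
have cardO1u : #|porbit g1 u| = #|porbit g2 u| + #|porbit g2 z|.
  by rewrite -(card_porbitU nO2uz) porbit_mul_tpermU porbit_step1_z setUid.
have O1u_fresh : [disjoint [set porbit g1 v] & [set porbit g1 u]].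
  by rewrite disjoints1 inE; exact: nO1vu.
rewrite (porbit_eq vu) setUid (setDidPl O1u_fresh) setUA.
apply: bounded_step_split3.
- apply: contraNneq nO1vu => O1v2u.
  have : u \in porbit g1 v by rewrite O1v2u porbit_id.
  by move/porbit_eq ->.
- apply: contraNneq nO1vu => O1vz.
  have : z \in porbit g1 v by rewrite O1vz set11.
  by move/porbit_eq; rewrite porbit_step1_z => ->.
- by rewrite -porbit_step2_z; exact: nO2uz.
- by rewrite cardOu cardO1u porbit_step2_z cards1 addn1 addSn addnC.
Qed.

End ExcisionStep.

Section Excision.
Variable T : finType.
Implicit Types (g s t : {perm T}) (u z : T).
Local Open Scope group_scope.

(* Deletes [z] from the cycle notation of [s], leaving it fixed. *)
Definition excise z s : {perm T} := s * tperm (s z) z.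

Lemma excise_mulVg z s t :
  (excise z s)^-1 * excise z t = s^-1 * t * tperm (t z) ((s^-1 * t) z) * tperm (t z) z.
Proof.
have gsz : (s^-1 * t) (s z) = t z by rewrite permM permK.
rewrite /excise invMg tpermV !mulgA -(mulgA (tperm (s z) z)).
by rewrite [tperm (s z) z * _]conjgC tpermJ gsz.
Qed.

Lemma bounded_step_porbits g u z :
  bounded_step (porbits g) (porbits (g * tperm u (g z) * tperm u z)).
Proof.
rewrite porbits_excision_step; apply: bounded_step_local.
- by rewrite subUset !sub1set !imset_f.
- exact: excision_step_disjoint.
- exact: bounded_step_excision_cycles.
Qed.

End Excision.

Section ExcisionSequence.
Variable T : finType.
Implicit Types (g s t : {perm T}) (zs : seq T).
Local Open Scope group_scope.

Definition excise_seq zs s := foldl (fun s z => excise z s) s zs.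

Lemma bounded_step_excise z s t :
  bounded_step (porbits (s^-1 * t)) (porbits ((excise z s)^-1 * excise z t)).
Proof. by rewrite excise_mulVg; apply: bounded_step_porbits. Qed.

Lemma nfixed_excise_seq zs s t : exists2 S, affordable (porbits (s^-1 * t)) (size zs) S &
  (nfixed (porbits ((excise_seq zs s)^-1 * excise_seq zs t))
     <= nfixed (porbits (s^-1 * t)) + 2 * size zs + #|S|)%N.
Proof.
elim: zs s t => [|z zs IH] s t /=.
  by exists set0; rewrite ?affordable0 // cards0 !addn0.
have [S1 aff1 le1] := IH (excise z s) (excise z t).
have [S aff le] := bounded_step_excise aff1.
exists S => //; move: le1 le.
move: (nfixed _) (nfixed _) (nfixed _) #|S1| #|S| => n2 n1 n0 k1 k; lia.
Qed.

Lemma affordable_eq0 g r S :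
  (forall x, ~~ [&& odd #|porbit g x|, (3 <= #|porbit g x|)%N
                  & (#|porbit g x| <= 2 * r + 1)%N]) ->
  affordable (porbits g) r S -> S = set0.
Proof.
move=> noshort /and3P[sS /forall_inP oddS cS]; apply/setP => C; rewrite inE.
apply/negP => CS; have /imsetP[x _ Cx] := subsetP sS C CS.
have /andP[oC gtC] := oddS C CS.
have : (#|C|./2 <= r)%N by apply: leq_trans cS; rewrite /cost (bigD1 C) //= leq_addr.
by move: (noshort x); rewrite -Cx oC gtC /=; lia.
Qed.

Lemma nfixed_porbits g : nfixed (porbits g) = #|[set x | g x == x]|.
Proof.
rewrite /nfixed -big_mkcondr /= sum1dep_card.
have -> : [set C | (C \in porbits g) && (#|C| == 1)%N] = set1 @: [set x | g x == x].
  apply/setP => C; rewrite inE; apply/andP/imsetP => [[/imsetP[y _ ->] /cards1P[x Ex]]|].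
    have yx : y = x by apply/set1P; rewrite -Ex porbit_id.
    subst y; exists x => //; rewrite inE; apply/eqP/set1P.
    by rewrite -Ex porbit_stable ?porbit_id.
  move=> [x]; rewrite inE => /eqP gx ->; rewrite -(porbit_fixed gx) imset_f //.
  by rewrite (porbit_fixed gx) cards1.
by rewrite card_imset //; apply: set1_inj.
Qed.

End ExcisionSequence.

Lemma hd_add_fixed n (s t : {perm 'I_n}) :
  (hd s t + #|[set x | (s^-1 * t)%g x == x]| = n)%N.
Proof.
have -> : [set x | (s^-1 * t)%g x == x] = s @: [set x | s x == t x].
  apply/setP => y; rewrite inE; apply/idP/imsetP => [/eqP h|[x]].
    by exists (s^-1 y)%g; rewrite ?inE permKV // -permM h.
  by rewrite inE => /eqP h ->; rewrite permM permK h.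
rewrite card_imset; last exact: perm_inj.
rewrite /hd -[n in RHS]card_ord -(cardsC [set x | s x == t x]) addnC.
by congr (_ + _); apply: eq_card => x; rewrite !inE.
Qed.

Lemma hd_excise_seq n (zs : seq 'I_n) (s t : {perm 'I_n}) :
  (forall x, ~~ [&& odd #|porbit (s^-1 * t)%g x|, (3 <= #|porbit (s^-1 * t)%g x|)%N
                  & (#|porbit (s^-1 * t)%g x| <= 2 * size zs + 1)%N]) ->
  (hd s t <= hd (excise_seq zs s) (excise_seq zs t) + 2 * size zs)%N.
Proof.
move=> noshort; have [S affS] := nfixed_excise_seq zs s t.
rewrite (affordable_eq0 noshort affS) cards0 addn0 !nfixed_porbits.
have := hd_add_fixed s t; have := hd_add_fixed (excise_seq zs s) (excise_seq zs t).
move: (hd _ _) (hd _ _) => h1 h0; move: #|_| #|_| (size zs) => f1 f0 k; lia.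
Qed.

(* [s] as a map on [nat], the identity outside ['I_j], so that permutations of
   different degrees can be compared. *)
Definition permn j (s : {perm 'I_j}) (k : nat) : nat :=
  oapp (fun x : 'I_j => val (s x)) k (insub k).

Lemma permn_ord j (s : {perm 'I_j}) (x : 'I_j) : permn s x = s x.
Proof. by rewrite /permn valK. Qed.

Lemma permn_ge j (s : {perm 'I_j}) k : (j <= k)%N -> permn s k = k.
Proof. by move=> jk; rewrite /permn insubN // -leqNgt. Qed.

Lemma permn_cast i j (eq_ij : i = j) (s : {perm 'I_i}) : permn (cast_perm eq_ij s) =1 permn s.
Proof. by case: j / eq_ij; rewrite cast_perm_id. Qed.

Lemma hd_count j (s t : {perm 'I_j}) :
  hd s t = count (fun k => permn s k != permn t k) (iota 0 j).
Proof.
rewrite /hd cardsE cardE /enum_mem size_filter -enumT -val_enum_ord count_map.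
by apply: eq_count => x /=; rewrite !permn_ord.
Qed.

Lemma permn_ct j (s : {perm 'I_j}) k : (k < j.-1)%N ->
  permn (ct s) k = if permn s k == j.-1 then permn s j.-1 else permn s k.
Proof.
case: j s => [|j] s //= kj; have -> : k = Ordinal kj by [].
rewrite permn_ord /ct_succ permE ct_fun_val /ct_aux permM.
rewrite -[j]/(val (@ord_max j)) !permn_ord.
rewrite -[val (Ordinal kj)]/(val (widen_ord (leqnSn j) (Ordinal kj))) permn_ord.
case: tpermP => [/perm_inj/(congr1 val)/= jk|->|/eqP ne1 /eqP ne2]; last 1 first.
- by move: ne2; rewrite -val_eqE /= => /negbTE ->.
- by exfalso; move: (kj); rewrite jk ltnn.
- by rewrite eqxx.
Qed.

Lemma permn_excise n (z : 'I_n) (s : {perm 'I_n}) k :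
  permn (excise z s) k =
    if k == z then nat_of_ord z else if permn s k == z then permn s z else permn s k.
Proof.
case: (ltnP k n) => [kn|nk]; last first.
  have kz : (k == z) = false by apply: gtn_eqF; apply: leq_trans (ltn_ord z) nk.
  by rewrite !(permn_ge _ nk) kz.
have -> : k = Ordinal kn by []; rewrite !permn_ord /excise permM.
rewrite !val_eqE; case: tpermP => [/perm_inj ->|Ez|/eqP ne1 /eqP ne2]; first by rewrite eqxx.
- case: (eqVneq (Ordinal kn) z) => [Ekz|_]; first by rewrite -{1}Ekz Ez.
  by rewrite Ez eqxx.
- by rewrite (negbTE ne2) ifN //; apply: contra ne1 => /eqP ->.
Qed.

(* The points [n, n-1, ..., n-m+1], in the order [ctm m] deletes them. *)
Definition top_points n m : seq 'I_n.+1 := [seq inord (n - i) | i <- iota 0 m].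

Lemma size_top_points n m : size (top_points n m) = m.
Proof. by rewrite size_map size_iota. Qed.

Lemma excise_seq_top_pointsS n m (s : {perm 'I_n.+1}) :
  excise_seq (top_points n m.+1) s = excise (inord (n - m)) (excise_seq (top_points n m) s).
Proof. by rewrite /top_points -[m.+1]addn1 iotaD map_cat /excise_seq foldl_cat. Qed.

Lemma permn_ctm n m (s : {perm 'I_n.+1}) : (m <= n.+1)%N ->
  (forall k, k < n.+1 - m -> permn (ctm m s) k = permn (excise_seq (top_points n m) s) k)%N /\
  (forall k, n.+1 - m <= k -> permn (excise_seq (top_points n m) s) k = k)%N.
Proof.
elim: m => [|m IH] le_mn.
  by split => k k_lt; rewrite /= ?permn_cast // permn_ge // -(subn0 n.+1).
have [IHlo IHhi] := IH (ltnW le_mn).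
set s' := excise_seq (top_points n m) s; set z : 'I_n.+1 := inord (n - m).
have vz : nat_of_ord z = (n - m)%N by rewrite /z inordK // ltnS leq_subr.
rewrite excise_seq_top_pointsS -/s' -/z; split => k k_lt.
- rewrite /= permn_cast permn_ct; last by rewrite subnS in k_lt.
  have -> : (n.+1 - m).-1 = (n - m)%N by rewrite subSn ?leq_subr // -ltnS.
  rewrite !IHlo ?permn_excise; [|lia|lia].
  by rewrite vz (@ltn_eqF k (n - m)) // -subSS.
- rewrite permn_excise; case: (eqVneq k z) => [-> //|kz].
  by rewrite IHhi ?ifN //; move: kz; rewrite vz; lia.
Qed.

Lemma hd_ctm n m (s t : {perm 'I_n.+1}) : (m <= n.+1)%N ->
  hd (ctm m s) (ctm m t) = hd (excise_seq (top_points n m) s) (excise_seq (top_points n m) t).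
Proof.
move=> le_mn.
have [lo_s hi_s] := permn_ctm s le_mn; have [lo_t hi_t] := permn_ctm t le_mn.
rewrite !hd_count.
have -> : iota 0 n.+1 = iota 0 (n.+1 - m) ++ iota (n.+1 - m) m by rewrite -iotaD subnK.
rewrite count_cat.
rewrite (@eq_in_count _ _ pred0 (iota _ m)) ?count_pred0 ?addn0; last first.
  by move=> k; rewrite mem_iota => /andP[k_ge _]; rewrite hi_s // hi_t // eqxx.
by apply: eq_in_count => k; rewrite mem_iota add0n => /andP[_ k_lt]; rewrite lo_s // lo_t.
Qed.

Lemma hd_ctm_ge n m (s t : {perm 'I_n.+1}) : (m <= n.+1)%N ->
  (forall x, ~~ [&& odd #|porbit (s^-1 * t)%g x|, (3 <= #|porbit (s^-1 * t)%g x|)%N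
                  & (#|porbit (s^-1 * t)%g x| <= 2 * m + 1)%N]) ->
  (hd s t <= hd (ctm m s) (ctm m t) + 2 * m)%N.
Proof.
move=> le_mn noshort; rewrite hd_ctm //.
by have := @hd_excise_seq _ (top_points n m) s t; rewrite size_top_points; apply.
Qed.

Lemma hd_refl n (s : {perm 'I_n}) : hd s s = 0.
Proof. by apply/eqP; rewrite cards_eq0; apply/eqP/setP => x; rewrite !inE eqxx. Qed.

Lemma hdP_le_n n (P : {set {perm 'I_n}}) : (hdP P <= n)%N.
Proof. exact: (bigmin_le_id (T := nat)). Qed.

Lemma hdP_le n (P : {set {perm 'I_n}}) s t :
  s \in P -> t \in P -> t != s -> (hdP P <= hd s t)%N.
Proof.
move=> sP tP ts.
have inner : (\big[minn/n]_(u in P | u != s) hd s u <= hd s t)%N.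
  by apply: (bigmin_le_cond (T := nat)); rewrite tP ts.
by apply: leq_trans inner; apply: (bigmin_le_cond (T := nat)).
Qed.

Lemma hdP_ge n (P : {set {perm 'I_n}}) k : (k <= n)%N ->
  (forall s t, s \in P -> t \in P -> t != s -> k <= hd s t)%N -> (k <= hdP P)%N.
Proof.
move=> kn hk.
change (k <= \big[Order.min/n]_(s in P) \big[Order.min/n]_(t in P | t != s) hd s t)%O.
apply/bigmin_geP; split => // s sP; apply/bigmin_geP; split => // t /andP[tP ts].
exact: hk.
Qed.

Local Open Scope group_scope.

Theorem corollary5p3 (n : nat) (P : {set {perm 'I_n}}) (d m : nat) :
  P != set0 ->
  hdP P = d ->
  (1 <= m <= n.-1)%N ->
  (forall s t, s \in P -> t \in P -> forall x : 'I_n,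
      ~~ [&& odd #|porbit (s^-1 * t) x|, (3 <= #|porbit (s^-1 * t) x|)%N
           & (#|porbit (s^-1 * t) x| <= 2 * m + 1)%N]) ->
  (d - 2 * m <= hdP (ctm_set m P))%N /\
  ((2 * m < d)%N -> #|ctm_set m P| = #|P|).
Proof.
case: n P => [|n] P _ hPd /andP[m_gt0 m_le] noshort; first lia.
have le_mn : (m <= n.+1)%N by apply: leq_trans m_le _.
have hd_ctm_P s t : s \in P -> t \in P -> (hd s t <= hd (ctm m s) (ctm m t) + 2 * m)%N.
  by move=> sP tP; apply: hd_ctm_ge => // x; apply: noshort.
have d_le s t : s \in P -> t \in P -> t != s -> (d <= hd s t)%N.
  by rewrite -hPd; apply: hdP_le.
have d_le_n : (d <= n.+1)%N by rewrite -hPd hdP_le_n.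
split.
  apply: hdP_ge => [|_ _ /imsetP[s sP ->] /imsetP[t tP ->] nts]; first lia.
  have ts : t != s by apply: contraNneq nts => ->.
  by have := d_le s t sP tP ts; have := hd_ctm_P s t sP tP; lia.
move=> lt_2m_d; rewrite card_in_imset // => s t sP tP Est.
apply/eqP/negPn/negP => ts; have := d_le t s tP sP ts.
by have := hd_ctm_P t s tP sP; rewrite Est hd_refl; lia.
Qed.
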